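(* Let $P$ be a poset on $[n]$ with natural labeling and let all edge weights $x_1,\dots,x_n$ be strictly positive. Then each of the four continuous time Markov chains on $\mathcal{L}(P)$ given by the uniform transposition graph, the transposition graph, the uniform promotion graph, and the promotion graph is irreducible, and hence has a unique stationary distribution.
   Context: $\mathcal{L}(P)=\{\pi\in S_n : i\prec j \Rightarrow \pi^{-1}_i<\pi^{-1}_j\}$ in one-line notation $\pi=\pi_1\cdots\pi_n$. $\pi\tau_i$ ($1\le i<n$) swaps $\pi_i,\pi_{i+1}$ if they are incomparable and is $\pi$ otherwise; operators act on the right; $\partial_j=\tau_j\cdots\tau_{n-1}$ ($1\le j\le n$). All four graphs have vertex set $\mathcal{L}(P)$: uniform transposition graph has edges $\pi\to\pi\tau_j$ of weight $x_j$ ($j\in[n-1]$); transposition graph has edges $\pi\to\pi\tau_j$ of weight $x_{\pi_j}$; uniform promotion graph has edges $\pi\to\pi\partial_j$ of weight $x_j$ ($j\in[n]$); promotion graph has edges $\pi\to\pi\partial_j$ of weight $x_{\pi_j}$. The associated continuous time chain traverses each edge at rate equal to its weight; it is irreducible if its digraph is strongly connected. *)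

From HB Require Import structures.
From mathcomp Require Import all_boot all_order all_algebra all_fingroup.
Set Implicit Arguments. Unset Strict Implicit. Unset Printing Implicit Defensive.
Import Order.TTheory GRing.Theory Num.Theory.

(* Conventions: the ground set [n] = {1,...,n} is 'I_n = {0,...,n-1};
   positions 1..n are likewise 0..n-1.  A poset P is given by its strict
   order relation [prec : rel 'I_n].  A permutation s : {perm 'I_n} is read
   in one-line notation: s i is the entry pi_{i+1} at position i. *)

Local Open Scope ring_scope.
Section Defs.
Variables (n : nat) (prec : rel 'I_n).

Definition incomp (a b : 'I_n) : bool := ~~ prec a b && ~~ prec b a.

Definition linext (s : {perm 'I_n}) : bool :=
  [forall i, forall j, prec i j ==> ((s^-1)%g i < (s^-1)%g j)%N].

(* pi tau_{i+1} : swap the entries at positions i and i+1 (0-indexed) if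
   they are incomparable, identity otherwise (and identity if i+1 >= n). *)
Definition tau (s : {perm 'I_n}) (i : nat) : {perm 'I_n} :=
  match (insub i : option 'I_n), (insub i.+1 : option 'I_n) with
  | Some a, Some b => if incomp (s a) (s b) then (tperm a b * s)%g else s
  | _, _ => s
  end.

(* pi partial_{j+1} = pi tau_{j+1} tau_{j+2} ... tau_{n-1} (operators act on
   the right, so tau_{j+1} is applied first). *)
Definition partial (s : {perm 'I_n}) (j : nat) : {perm 'I_n} :=
  foldl tau s (iota j (n.-1 - j)).

Inductive graph_kind := UnifTransp | Transp | UnifProm | Prom.

Variables (R : realFieldType) (x : 'I_n -> R).

(* Outgoing weighted edges (target, weight) from s; multi-edges allowed. *)
Definition edges (k : graph_kind) (s : {perm 'I_n}) : seq ({perm 'I_n} * R) :=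
  match k with
  | UnifTransp => [seq (tau s j, x j) | j : 'I_n <- enum 'I_n & (j.+1 < n)%N]
  | Transp => [seq (tau s j, x (s j)) | j : 'I_n <- enum 'I_n & (j.+1 < n)%N]
  | UnifProm => [seq (partial s j, x j) | j : 'I_n <- enum 'I_n]
  | Prom => [seq (partial s j, x (s j)) | j : 'I_n <- enum 'I_n]
  end.

Definition rate (k : graph_kind) (s t : {perm 'I_n}) : R :=
  \sum_(e <- edges k s | e.1 == t) e.2.

Definition edge (k : graph_kind) (s t : {perm 'I_n}) : bool :=
  has (fun e => (e.1 == t) && (0 < e.2)) (edges k s).

Definition irreducible (k : graph_kind) : Prop :=
  forall s t, linext s -> linext t ->
    connect [rel a b | [&& linext a, linext b & edge k a b]] s t.

(* stationary distribution of the continuous-time chain with generator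
   Q(s,t) = rate s t (s <> t), Q(s,s) = - sum_{t <> s} rate s t, on L(P);
   represented as a function on all permutations vanishing off L(P). *)
Definition stationary (k : graph_kind) (p : {ffun {perm 'I_n} -> R}) : Prop :=
  [/\ forall s, ~~ linext s -> p s = 0,
      forall s, 0 <= p s,
      \sum_(s | linext s) p s = 1
    & forall t, linext t ->
        \sum_(s | linext s && (s != t)) p s * rate k s t
        = p t * \sum_(u | linext u && (u != t)) rate k t u].

End Defs.

From Pilot Require Import Defs.
From HB Require Import structures.
From mathcomp Require Import all_boot all_order all_algebra all_fingroup.
From mathcomp Require Import zify.
Set Implicit Arguments. Unset Strict Implicit. Unset Printing Implicit Defensive.
Import Order.TTheory GRing.Theory Num.Theory.

(* Since the labeling is natural, the identity is a linear extension, and bubble sort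
   joins every linear extension to it by adjacent swaps tau_i of incomparable entries,
   each increasing the potential sum_i i * s(i); tau_i is an involution, so the swaps
   can be undone.  These swaps are edges of the transposition graphs.  In the promotion
   graphs s partial_i = (s tau_i) partial_(i+1), and the injection partial_(i+1) of the
   finite set of permutations is inverted by one of its own iterates, so tau_i is again
   reachable.  For the stationary distribution: the generator matrix is singular, and
   the absolute value of a left null vector is still balanced because total inflow and
   total outflow agree.  Irreducibility makes every stationary distribution positive,
   and if p / q is maximal at m then (p m / q m) q - p is a nonnegative balanced vector
   vanishing at m, hence everywhere. *)

Lemma connect_iter (T : finType) (e : rel T) (P : pred T) (f : T -> T) :
    (forall c, P c -> P (f c) /\ e c (f c)) ->
  forall m c, P c -> connect e c (iter m f c).
Proof.
move=> f_step m c Pc; suff: P (iter m f c) /\ connect e c (iter m f c) by case.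
elim: m => [|m [Pm cm]] /=; first by split; [|apply: connect0].
have [Pfm efm] := f_step _ Pm; split=> //; exact: connect_trans cm (connect1 efm).
Qed.

Section AdjacentSwaps.
Variables (n : nat) (prec : rel 'I_n).

Local Notation tau := (tau prec).
Local Notation linext := (linext prec).

Lemma incompC : symmetric (incomp prec).
Proof. by move=> u v; rewrite /incomp andbC. Qed.

Lemma tau_out s i : (n <= i.+1)%N -> tau s i = s.
Proof.
move=> le_n_i1; rewrite /Defs.tau (@insubN _ _ _ i.+1) -?leqNgt //.
by case: (insub i).
Qed.

Lemma tau_succ s (a b : 'I_n) : val b = (val a).+1 ->
  tau s a = if incomp prec (s a) (s b) then (tperm a b * s)%g else s.
Proof. by move=> def_b; rewrite /Defs.tau valK -def_b valK. Qed.

Lemma tauK i : involutive (tau^~ i).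
Proof.
move=> s; case: (ltnP i.+1 n) => [lt_i1_n|]; last by move=> ?; rewrite !tau_out.
pose a : 'I_n := Ordinal (ltnW lt_i1_n); pose b : 'I_n := Ordinal lt_i1_n.
rewrite -[i]/(val a) (@tau_succ s a b) //.
case: ifP => s_ab; last by rewrite (@tau_succ s a b) // s_ab.
rewrite (@tau_succ _ a b) // !permM tpermL tpermR incompC s_ab.
by rewrite mulgA tperm2 mul1g.
Qed.

Lemma tperm_succ_lt (a b u v : 'I_n) : val b = (val a).+1 -> (u < v)%N ->
  ~~ ((u == a) && (v == b)) -> (tperm a b u < tperm a b v)%N.
Proof.
move=> def_b lt_uv ne_uv_ab.
have ne_val (c d : 'I_n) : c != d -> val c != val d by [].
case: tpermP => [ua|ub|/eqP/ne_val ua /eqP/ne_val ub];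
case: tpermP => [va|vb|/eqP/ne_val va /eqP/ne_val vb]; subst => //;
  rewrite ?eqxx ?andbT /= in ne_uv_ab *; simpl in *; try lia.
all: by move: ne_uv_ab => /ne_val; lia.
Qed.

Lemma linext_tau s i : linext s -> linext (tau s i).
Proof.
move=> Ls; case: (ltnP i.+1 n) => [lt_i1_n|]; last by move=> ?; rewrite tau_out.
pose a : 'I_n := Ordinal (ltnW lt_i1_n); pose b : 'I_n := Ordinal lt_i1_n.
rewrite -[i]/(val a) (@tau_succ s a b) //; case: ifP => // s_ab.
apply/forallP => y; apply/forallP => z; apply/implyP => prec_yz.
have lt_yz := implyP (forallP (forallP Ls y) z) prec_yz.
rewrite invMg tpermV !permM; apply: (tperm_succ_lt _ lt_yz) => //.
apply: contraTN s_ab => /andP[/eqP ya /eqP zb].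
by rewrite /incomp -ya -zb !permKV prec_yz.
Qed.

Lemma linext_partial s j : linext s -> linext (partial prec s j).
Proof. by rewrite /partial; elim: (iota _ _) s => //= i l IHl s /(linext_tau i) /IHl. Qed.

Lemma partial_inj j : injective (partial prec ^~ j).
Proof.
rewrite /partial; elim: (iota _ _) => [|i l IHl] s1 s2 //= /IHl.
exact: (can_inj (tauK i)).
Qed.

Lemma partial_succ s (a b : 'I_n) : val b = (val a).+1 ->
  partial prec s a = partial prec (tau s a) b.
Proof.
move=> def_b; rewrite /partial.
have -> : (n.-1 - a = (n.-1 - b).+1)%N by have := ltn_ord b; simpl in *; lia.
by rewrite /= -def_b.
Qed.

Lemma connect_tau_of_partial (e : rel {perm 'I_n}) :
    (forall s (j : 'I_n), linext s -> e s (partial prec s j)) ->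
  forall s i, linext s -> (i.+1 < n)%N -> connect e s (tau s i).
Proof.
move=> e_partial s i Ls lt_i1_n.
pose a : 'I_n := Ordinal (ltnW lt_i1_n); pose b : 'I_n := Ordinal lt_i1_n.
have -> : tau s i = finv (partial prec ^~ b) (partial prec s a).
  by rewrite (@partial_succ s a b) // finv_f //; apply: partial_inj.
apply: connect_trans (connect1 (e_partial s a Ls)) _.
apply: (connect_iter (P := linext)) (linext_partial a Ls) => c Lc.
by split; [apply: linext_partial | apply: e_partial].
Qed.

End AdjacentSwaps.

Section BubbleSort.
Variables (n : nat) (prec : rel 'I_n).
Hypothesis natural : forall i j, prec i j -> (i < j)%N.

Local Notation tau := (tau prec).
Local Notation linext := (linext prec).

Lemma linext1 : linext 1%g.
Proof.
apply/forallP => y; apply/forallP => z; apply/implyP => /natural.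
by rewrite invg1 !perm1.
Qed.

Definition sort_potential (s : {perm 'I_n}) : nat := \sum_(i < n) i * s i.

Lemma sort_potential_le s : (sort_potential s <= n * (n * n))%N.
Proof.
rewrite -[X in (_ <= X * _)%N]card_ord -sum_nat_const.
by apply: leq_sum => i _; apply: leq_mul; apply: ltnW.
Qed.

Lemma sort_potential_swap (s : {perm 'I_n}) (a b : 'I_n) :
    val b = (val a).+1 -> (s b < s a)%N ->
  (sort_potential s < sort_potential (tperm a b * s)%g)%N.
Proof.
move=> def_b lt_sb_sa.
have ne_ba : b != a by rewrite -(inj_eq val_inj) def_b /= neq_ltn ltnSn orbT.
have split_ab (F : 'I_n -> nat) :
    (\sum_(i < n) F i = F a + F b + \sum_(i | (i != a) && (i != b)) F i)%N.
  by rewrite (bigD1 a) //= (bigD1 b) //= addnA.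
rewrite /sort_potential !split_ab !permM tpermL tpermR.
rewrite [X in (_ < _ + X)%N](eq_bigr (fun i : 'I_n => i * s i)%N) => [|i /andP[ia ib]].
  2: by rewrite permM tpermD // eq_sym.
rewrite ltn_add2r def_b /=; simpl in *; nia.
Qed.

Lemma perm_ascending_eq1 (s : {perm 'I_n}) :
  (forall i j : 'I_n, val j = (val i).+1 -> (s i < s j)%N) -> s = 1%g.
Proof.
move=> s_asc.
have ge_s k (i : 'I_n) : val i = k -> (k <= s i)%N.
  elim: k i => [//|k IHk] i def_i.
  have lt_k_n : (k < n)%N by have := ltn_ord i; simpl in *; lia.
  have := IHk (Ordinal lt_k_n) erefl; have := s_asc (Ordinal lt_k_n) i def_i.
  simpl in *; lia.
have le_s d (i : 'I_n) : (val i + d = n.-1)%N -> (s i <= i)%N.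
  elim: d i => [|d IHd] i def_d; first by have := ltn_ord (s i); simpl in *; lia.
  have lt_i1_n : (i.+1 < n)%N by have := ltn_ord i; simpl in *; lia.
  have := IHd (Ordinal lt_i1_n) ltac:(simpl in *; lia).
  have := s_asc i (Ordinal lt_i1_n) erefl; simpl in *; lia.
apply/permP => i; apply/val_inj/eqP; rewrite perm1 eqn_leq (le_s (n.-1 - i)%N) ?ge_s //.
by have := ltn_ord i; simpl in *; lia.
Qed.

Lemma linext_descent s : linext s -> s != 1%g ->
  exists2 i, (i.+1 < n)%N & (sort_potential s < sort_potential (tau s i))%N.
Proof.
move=> Ls ne_s1.
have [/forallP s_asc|] :=
  boolP [forall a : 'I_n, forall b : 'I_n, (val b == (val a).+1) ==> (s a < s b)%N].
  case/eqP: ne_s1; apply: perm_ascending_eq1 => a b def_b.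
  by rewrite (implyP (forallP (s_asc a) b)) // def_b.
case/forallPn => a /forallPn[b]; rewrite negb_imply -leqNgt => /andP[/eqP def_b].
rewrite leq_eqVlt (inj_eq val_inj) (inj_eq perm_inj) -(inj_eq val_inj) def_b.
rewrite eq_sym (ltn_eqF (ltnSn _)) /= => lt_sb_sa.
have s_ab : incomp prec (s a) (s b).
  rewrite /incomp; apply/andP; split; apply/negP; first by move/natural; simpl in *; lia.
  move=> prec_ba.
  by have := implyP (forallP (forallP Ls _) _) prec_ba; rewrite !permK def_b ltnNge leqnSn.
exists a; first by have := ltn_ord b; simpl in *; rewrite def_b.
by rewrite (@tau_succ _ _ _ a b) // s_ab; apply: sort_potential_swap.
Qed.

Variable E : rel {perm 'I_n}.
Hypothesis connect_tau : forall s i, linext s -> (i.+1 < n)%N -> connect E s (tau s i).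

Lemma connect_linext1 s : linext s -> connect E s 1%g /\ connect E 1%g s.
Proof.
have [m] := ubnP (n * (n * n) - sort_potential s); elim: m s => // m IHm s lt_pot Ls.
have [->|ne_s1] := eqVneq s 1%g; first by split; apply: connect0.
have [i lt_i1_n lt_pot_s] := linext_descent Ls ne_s1.
have Ls' := linext_tau i Ls.
have [to1 from1] := IHm (tau s i) ltac:(have := sort_potential_le (tau s i); lia) Ls'.
split; first exact: connect_trans (connect_tau Ls lt_i1_n) to1.
by apply: connect_trans from1 _; rewrite -{2}(tauK prec i s); apply: connect_tau.
Qed.

End BubbleSort.

Local Open Scope ring_scope.

Section StationaryVectorOrd.
Variables (R : realFieldType) (N : nat) (r : 'I_N -> 'I_N -> R).
Hypothesis r_ge0 : forall i j, 0 <= r i j.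

Let out t := \sum_(u | u != t) r t u.

Lemma exists_balanced_nonzero : (0 < N)%N ->
  exists2 w : 'I_N -> R, (exists t, w t != 0)
    & forall t, \sum_(s | s != t) w s * r s t = w t * out t.
Proof.
move=> N_gt0.
pose A := \matrix_(i, j) (if i == j then - out i else r i j).
have A_rows0 : A *m const_mx 1 = 0 :> 'cV_N.
  apply/matrixP => i j; rewrite !mxE (bigD1 i) //= !mxE eqxx mulr1.
  under eq_bigr => u ne_ui do rewrite !mxE eq_sym (negbTE ne_ui) mulr1.
  by rewrite addNr.
have /det0P[w nz_w wA0] : \det A == 0.
  rewrite -det_tr; apply/det0P; exists (const_mx 1)^T.
    by apply/eqP => /matrixP/(_ 0 (Ordinal N_gt0))/eqP; rewrite !mxE oner_eq0.
  by rewrite -[A^T]trmxK -trmx_mul trmxK A_rows0 trmx0.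
exists (w 0).
  apply/existsP; apply: contraR nz_w => /existsPn w0.
  by apply/eqP/matrixP => i j; rewrite ord1 mxE; apply/eqP/negPn.
move=> t; have /eqP := congr1 (fun M : 'rV[R]_N => M 0 t) wA0.
rewrite !mxE (bigD1 t) //= !mxE eqxx mulrN addrC subr_eq0 => /eqP <-.
by apply: eq_bigr => s ne_st; rewrite mxE (negbTE ne_st).
Qed.

Lemma balanced_norm (w : 'I_N -> R) :
    (forall t, \sum_(s | s != t) w s * r s t = w t * out t) ->
  forall t, \sum_(s | s != t) `|w s| * r s t = `|w t| * out t.
Proof.
move=> w_bal.
have out_ge0 t : 0 <= out t by apply: sumr_ge0.
have le_out t : `|w t| * out t <= \sum_(s | s != t) `|w s| * r s t.
  rewrite -(ger0_norm (out_ge0 t)) -normrM -w_bal.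
  apply: le_trans (ler_norm_sum _ _ _) _.
  by apply: ler_sum => s _; rewrite normrM (ger0_norm (r_ge0 _ _)).
have total0 : \sum_t (\sum_(s | s != t) `|w s| * r s t - `|w t| * out t) = 0.
  rewrite sumrB (exchange_big_dep predT) //=; apply/eqP; rewrite subr_eq0; apply/eqP.
  by apply: eq_bigr => s _; rewrite mulr_sumr; apply: eq_bigl => u; rewrite eq_sym.
move=> t; apply/eqP; rewrite -subr_eq0; apply/eqP.
by apply: (psumr_eq0P _ total0) => // u _; rewrite subr_ge0.
Qed.

Lemma exists_stationary_ord : (0 < N)%N ->
  exists q : 'I_N -> R, [/\ forall i, 0 <= q i, \sum_i q i = 1
    & forall t, \sum_(s | s != t) q s * r s t = q t * out t].
Proof.
case/exists_balanced_nonzero => w [t0 nz_wt0] /balanced_norm w_bal.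
have norm_sum_gt0 : 0 < \sum_i `|w i|.
  rewrite (bigD1 t0) //= ltr_pwDl ?normr_gt0 //; exact: sumr_ge0.
exists (fun i => `|w i| / \sum_i `|w i|); split.
- by move=> i; rewrite divr_ge0 // ltW.
- by rewrite -mulr_suml divff ?gt_eqF.
- move=> t; rewrite mulrAC -w_bal mulr_suml.
  by apply: eq_bigr => s _; rewrite mulrAC.
Qed.

End StationaryVectorOrd.

Section StationaryDistribution.
Variables (R : realFieldType) (T : finType) (V : pred T) (r : T -> T -> R).
Hypothesis r_ge0 : forall s t, 0 <= r s t.

Definition balanced (v : T -> R) : Prop := forall t, V t ->
  \sum_(s | V s && (s != t)) v s * r s t = v t * \sum_(u | V u && (u != t)) r t u.

Definition stationary_on (p : T -> R) : Prop :=
  [/\ forall s, ~~ V s -> p s = 0, forall s, 0 <= p s,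
      \sum_(s | V s) p s = 1 & balanced p].

Lemma exists_stationary s0 : V s0 -> exists p : {ffun T -> R}, stationary_on p.
Proof.
move=> Vs0; have N_gt0 : (0 < #|V|)%N by apply/card_gt0P; exists s0.
have [q [q_ge0 q_sum1 q_bal]] :=
  exists_stationary_ord (fun i j => r_ge0 (enum_val i) (enum_val j)) N_gt0.
pose p := [ffun s => if V s then q (enum_rank_in Vs0 s) else 0].
have p_enum i : p (enum_val i) = q i.
  by rewrite ffunE (enum_valP i : V (enum_val i)) enum_valK_in.
have sum_V (F : T -> R) (j : 'I_#|V|) : \sum_(s | V s && (s != enum_val j)) F s =
    \sum_(i | i != j) F (enum_val i).
  transitivity (\sum_(i < #|V| | enum_val i != enum_val j) F (enum_val i)).
    exact: big_enum_val_cond.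
  by apply: eq_bigl => i; rewrite (inj_eq enum_val_inj).
exists p; split.
- by move=> s /negbTE V's; rewrite ffunE V's.
- by move=> s; rewrite ffunE; case: ifP.
- transitivity (\sum_(i < #|V|) p (enum_val i)); first exact: big_enum_val.
  by under eq_bigr do rewrite p_enum.
- move=> t Vt; rewrite -(enum_rankK_in Vs0 Vt) !sum_V p_enum -q_bal.
  by under eq_bigr do rewrite p_enum.
Qed.

Definition rate_rel : rel T := [rel s t | [&& V s, V t & 0 < r s t]].

Lemma balanced_zero_backward v : (forall s, V s -> 0 <= v s) -> balanced v ->
  forall s t, connect rate_rel s t -> v t = 0 -> v s = 0.
Proof.
move=> v_ge0 v_bal s t /connectP[p]; elim: p s => [_ _ -> //|y p IHp] s /=.
case/andP=> /and3P[Vs Vy r_sy] y_p def_t vt0; have vy0 := IHp y y_p def_t vt0.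
have [-> //|ne_sy] := eqVneq s y.
have flow_ge0 u : V u && (u != y) -> 0 <= v u * r u y.
  by case/andP=> Vu _; rewrite mulr_ge0 ?v_ge0.
(* Nothing flows into a state of zero mass, and r s y > 0. *)
have inflow0 : \sum_(u | V u && (u != y)) v u * r u y = 0 by rewrite v_bal // vy0 mul0r.
have /(_ s) := psumr_eq0P flow_ge0 inflow0; rewrite Vs ne_sy => /(_ isT)/eqP.
by rewrite mulf_eq0 (gt_eqF r_sy) orbF => /eqP.
Qed.

Hypothesis rate_irreducible : forall s t, V s -> V t -> connect rate_rel s t.

Lemma stationary_on_gt0 p : stationary_on p -> forall s, V s -> 0 < p s.
Proof.
case=> _ p_ge0 p_sum1 p_bal s Vs; rewrite lt0r p_ge0 andbT; apply/eqP => ps0.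
move/eqP: p_sum1; rewrite big1 ?(eq_sym 0) ?oner_eq0 // => u Vu.
exact: balanced_zero_backward (fun s _ => p_ge0 s) p_bal u s (rate_irreducible Vu Vs) ps0.
Qed.

Lemma stationary_on_unique p q : stationary_on p -> stationary_on q -> p =1 q.
Proof.
move=> p_stat q_stat; have q_gt0 := stationary_on_gt0 q_stat.
case: p_stat => p_out p_ge0 p_sum1 p_bal; case: q_stat => q_out q_ge0 q_sum1 q_bal.
have [s0 Vs0] : exists s0, V s0.
  case: (pickP V) => [s0 Vs0|V0]; first by exists s0.
  by move/eqP: p_sum1; rewrite big_pred0 // eq_sym oner_eq0.
case: (arg_maxP (fun s => p s / q s) Vs0) => m Vm p_le.
set M := p m / q m; pose v s := M * q s - p s.
have v_ge0 s : V s -> 0 <= v s.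
  by move=> Vs; rewrite subr_ge0 -ler_pdivrMr; [exact: p_le | exact: q_gt0].
have v_bal : balanced v.
  move=> t Vt; under eq_bigr do rewrite mulrBl -mulrA.
  by rewrite sumrB -mulr_sumr q_bal // p_bal // mulrBl mulrA.
have vm0 : v m = 0 by rewrite /v /M divfK ?subrr // gt_eqF ?q_gt0.
have p_eq s : V s -> p s = M * q s.
  move=> Vs; apply/eqP; rewrite eq_sym -subr_eq0; apply/eqP.
  exact: balanced_zero_backward v_ge0 v_bal s m (rate_irreducible Vs Vm) vm0.
have M1 : M = 1.
  by rewrite -p_sum1 -[M]mulr1 -q_sum1 mulr_sumr; apply: eq_bigr => s /p_eq.
move=> s; have [Vs|V's] := boolP (V s); first by rewrite p_eq // M1 mul1r.
by rewrite p_out ?q_out.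
Qed.

End StationaryDistribution.

Section PosetChains.
Variables (n : nat) (prec : rel 'I_n).
Hypothesis natural : forall i j, prec i j -> (i < j)%N.
Variables (R : realFieldType) (x : 'I_n -> R).
Hypothesis x_pos : forall i, 0 < x i.

Definition chain_rel k : rel {perm 'I_n} :=
  [rel s t | [&& linext prec s, linext prec t & edge prec x k s t]].

Lemma edges_gt0 k s e : e \in edges prec x k s -> 0 < e.2.
Proof. by case: k; rewrite /edges => /mapP[j _ ->] /=; apply: x_pos. Qed.

Lemma mem_edges_edge k s t w : (t, w) \in edges prec x k s -> edge prec x k s t.
Proof. by move=> tw_s; apply/hasP; exists (t, w); rewrite //= eqxx (edges_gt0 tw_s). Qed.

Lemma edge_tau s i : (i.+1 < n)%N ->
  edge prec x UnifTransp s (tau prec s i) /\ edge prec x Transp s (tau prec s i).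
Proof.
move=> lt_i1_n; pose a : 'I_n := Ordinal (ltnW lt_i1_n).
have a_adj : a \in [seq j : 'I_n <- enum 'I_n | (j.+1 < n)%N].
  by rewrite mem_filter mem_enum andbT.
by split; apply: mem_edges_edge; apply/mapP; exists a.
Qed.

Lemma edge_partial s (j : 'I_n) :
  edge prec x UnifProm s (partial prec s j) /\ edge prec x Prom s (partial prec s j).
Proof. by split; apply: mem_edges_edge; apply/mapP; exists j; rewrite ?mem_enum. Qed.

Lemma connect_chain_tau k s i : linext prec s -> (i.+1 < n)%N ->
  connect (chain_rel k) s (tau prec s i).
Proof.
move=> Ls lt_i1_n; have [eU eT] := edge_tau s lt_i1_n.
have chain_partial k' : (forall c (j : 'I_n), edge prec x k' c (partial prec c j)) ->
    connect (chain_rel k') s (tau prec s i).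
  move=> e_partial; apply: connect_tau_of_partial Ls lt_i1_n => c j Lc.
  by rewrite /chain_rel /= Lc linext_partial ?e_partial.
case: k; [| |apply: chain_partial => c j; exact: (edge_partial c j).1
             |apply: chain_partial => c j; exact: (edge_partial c j).2];
  by apply: connect1; rewrite /chain_rel /= Ls linext_tau.
Qed.

Lemma chain_irreducible k : irreducible prec x k.
Proof.
move=> s t Ls Lt.
have [s_to1 _] := connect_linext1 natural (@connect_chain_tau k) Ls.
have [_ from1_t] := connect_linext1 natural (@connect_chain_tau k) Lt.
exact: connect_trans s_to1 from1_t.
Qed.

Lemma rate_ge0 k s t : 0 <= rate prec x k s t.
Proof. by rewrite /rate big_seq_cond sumr_ge0 // => e /andP[/edges_gt0/ltW]. Qed.

Lemma rate_gt0 k s t : edge prec x k s t -> 0 < rate prec x k s t.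
Proof.
move=> /hasP[e e_s /andP[/eqP et e_gt0]].
rewrite lt0r rate_ge0 andbT /rate big_seq_cond psumr_neq0.
  by apply/hasP; exists e; rewrite // e_s et eqxx.
by move=> e' /andP[/edges_gt0/ltW].
Qed.

Lemma chain_rate_irreducible k s t : linext prec s -> linext prec t ->
  connect (rate_rel (linext prec) (rate prec x k)) s t.
Proof.
move=> Ls Lt; apply: connect_sub (chain_irreducible k Ls Lt) => a b /and3P[La Lb e_ab].
by apply: connect1; rewrite /rate_rel /= La Lb rate_gt0.
Qed.

End PosetChains.

Theorem corollary4p2 (n : nat) (prec : rel 'I_n)
  (prec_irr : irreflexive prec) (prec_trans : transitive prec)
  (natural : forall i j, prec i j -> (i < j)%N)
  (R : realFieldType) (x : 'I_n -> R) (x_pos : forall i, 0 < x i)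
  (k : graph_kind) :
  irreducible prec x k /\ exists! p, stationary prec x k p.
Proof.
have r_ge0 := rate_ge0 prec x_pos k.
split; first exact: chain_irreducible.
have [p p_stat] := exists_stationary r_ge0 (linext1 natural).
have rate_irr := chain_rate_irreducible natural x_pos k.
exists p; split=> // q q_stat.
exact/ffunP/(stationary_on_unique r_ge0 rate_irr p_stat q_stat).
Qed.
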